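(* Let $C\ge0$. There is a constant $c(C)$ depending only on $C$ such that the following holds. Let $d,N\ge0$, let $0\neq H\in V_N$ and write $H=z^\nu(h_0+h_1z+\cdots+h_Rz^R)$ with $h_0h_R\ne0$, and assume $R\le 4d/3+C$. Consider the linear map \[ L_H:\mathcal R_d\to\mathbb F_q^{N+1},\qquad T\mapsto\bigl([z^{d+j}]\,T(z)H(z)\bigr)_{0\le j\le N}. \] Then $\operatorname{rank}L_H\ge R/4-c(C)$.
   Context: $V_N$ is the space of polynomials in $\mathbb F_q[z]$ of degree $\le N$; $[z^j]F$ is the coefficient of $z^j$ in $F$. For $d\ge0$, $\mathcal R_d=\{T(z)=\sum_{s=0}^{2d}T_sz^s\in\mathbb F_q[z]: T_s=T_{2d-s}\text{ for all }s\}$, the $(d+1)$-dimensional space of reciprocal polynomials with centre $d$. *)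

From HB Require Import structures.
From mathcomp Require Import all_boot all_order all_algebra.
Set Implicit Arguments. Unset Strict Implicit. Unset Printing Implicit Defensive.
Import Order.TTheory GRing.Theory Num.Theory.
Local Open Scope ring_scope.

Definition reciprocal (F : fieldType) (d : nat) (T : {poly F}) : bool :=
  (size T <= (2 * d).+1)%N && [forall s : 'I_((2 * d).+1), T`_s == T`_(2 * d - s)].

Definition recip_basis (F : fieldType) (d : nat) (k : 'I_d.+1) : {poly F} :=
  if (k == d :> nat) then 'X^d else 'X^k + 'X^(2 * d - k).

Definition LH (F : fieldType) (d N : nat) (H T : {poly F}) : 'rV[F]_N.+1 :=
  \row_(j < N.+1) (T * H)`_(d + j).

(* rank of L_H : R_d -> F^(N+1): rank of its matrix w.r.t. the basis above
   (rows are the images of the basis vectors). *)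
Definition rank_LH (F : fieldType) (d N : nat) (H : {poly F}) : nat :=
  \rank (\matrix_(k < d.+1, j < N.+1) (@LH F d N H (@recip_basis F d k)) ord0 j).

From HB Require Import structures.
From mathcomp Require Import all_boot all_order all_algebra.
From mathcomp Require Import zify lra.
Set Implicit Arguments.
Unset Strict Implicit.
Unset Printing Implicit Defensive.
Import Order.TTheory GRing.Theory Num.Theory.
Local Open Scope ring_scope.

(* Write R = deg h and k = floor(R/2) + 1, so that 2k > R. For k <= s, s' <= min(d, nu + R),
   the entry of L_H at the basis vector z^(d-s) + z^(d+s) and the coordinate
   j = nu + R - s' is H_(nu+R-s'+s) + H_(nu+R-s'-s); the second index lies below the
   valuation nu of H because s + s' > R.  The first vanishes for s > s' and is the
   leading coefficient of H for s = s', so this (min(d, nu+R) - floor(R/2))-square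
   minor is triangular with nonzero diagonal.  Hence rank L_H >= min(d, nu + R) - R/2,
   which is at least R/4 - 3C/4 when R <= 4d/3 + C. *)

Lemma mxrank_mxsub_le (F : fieldType) m n m' n' (f : 'I_m' -> 'I_m)
    (g : 'I_n' -> 'I_n) (M : 'M[F]_(m, n)) :
  (\rank (mxsub f g M) <= \rank M)%N.
Proof.
have -> : mxsub f g M = rowsub f 1%:M *m M *m colsub g 1%:M.
  by rewrite mulmx_colsub mulmx1 -rowsubE; apply/matrixP => i j; rewrite !mxE.
exact: leq_trans (mxrankM_maxl _ _) (mxrankM_maxr _ _).
Qed.

Lemma upper_trig_unitmx (F : fieldType) n (A : 'M[F]_n) :
  (forall i j : 'I_n, (j < i)%N -> A i j = 0) -> (forall i, A i i != 0) ->
  A \in unitmx.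
Proof.
move=> A_upper A_diag; rewrite unitmxE -det_tr det_trig.
  by rewrite unitfE; apply/prodf_neq0 => i _; rewrite mxE.
by apply/is_trig_mxP => i j lt_ij; rewrite mxE A_upper.
Qed.

Lemma recip_basis_inord (F : fieldType) d s : (0 < s <= d)%N ->
  @recip_basis F d (inord (d - s)) = 'X^(d - s) + 'X^(d + s).
Proof.
move=> s_bnd; rewrite /recip_basis inordK; last by lia.
have -> : (d - s == d)%N = false by apply/eqP; lia.
by congr (_ + 'X^_); lia.
Qed.

Lemma coef_XsubXadd_mul (F : nzRingType) (p : {poly F}) d s j : (s <= d)%N ->
  (('X^(d - s) + 'X^(d + s)) * p)`_(d + j) =
    p`_(j + s) + (if (j < s)%N then 0 else p`_(j - s)).
Proof.
move=> le_sd; rewrite mulrDl coefD !coefXnM ltn_add2l.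
have -> : (d + j < d - s)%N = false by lia.
by congr (_ + _); [congr p`__; lia | case: ifP => // _; congr p`__; lia].
Qed.

Section MinorOfLH.

Variables (F : fieldType) (d N nu R : nat) (H : {poly F}).
Hypotheses (size_H : size H = (nu + R).+1) (size_H_le : (size H <= N.+1)%N).
Hypothesis H_low : forall n, (n < nu)%N -> H`_n = 0.

Let k := R./2.+1.
Let m := (minn d (nu + R) - R./2)%N.

Let shift_bnd (t : 'I_m) : (k + t <= minn d (nu + R))%N.
Proof. by have := ltn_ord t; rewrite /m /k; lia. Qed.

Let row_of (t : 'I_m) : 'I_d.+1 := inord (d - (k + t)).
Let col_of (t : 'I_m) : 'I_N.+1 := inord (nu + R - (k + t)).

Let LH_mx := \matrix_(i < d.+1, j < N.+1) LH d N H (@recip_basis F d i) ord0 j.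

Lemma LH_minorE (t t' : 'I_m) :
  mxsub row_of col_of LH_mx t t' = H`_(nu + R - (k + t') + (k + t)).
Proof.
have := shift_bnd t; have := shift_bnd t'.
have := size_H_le; rewrite size_H => le_top le_t' le_t.
rewrite !mxE inordK; last by lia.
rewrite recip_basis_inord; last by lia.
rewrite coef_XsubXadd_mul; last by lia.
case: ltnP => [_|le_s]; first by rewrite addr0.
by rewrite [X in _ + X]H_low ?addr0 //; move: le_s; rewrite /k -divn2; lia.
Qed.

Lemma LH_minor_unitmx : mxsub row_of col_of LH_mx \in unitmx.
Proof.
apply: upper_trig_unitmx => [i j lt_ji|i].
  by rewrite LH_minorE nth_default // size_H; have := shift_bnd i; lia.
have := shift_bnd i; rewrite LH_minorE => le_i.
have -> : (nu + R - (k + i) + (k + i) = nu + R)%N by lia.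
by rewrite -[(nu + R)%N]/((nu + R).+1.-1) -size_H -lead_coefE lead_coef_eq0
  -size_poly_eq0 size_H.
Qed.

Lemma rank_LH_ge_minn : (minn d (nu + R) - R./2 <= rank_LH d N H)%N.
Proof.
by rewrite -[X in (X <= _)%N]/m -(mxrank_unit LH_minor_unitmx) mxrank_mxsub_le.
Qed.

End MinorOfLH.

Lemma minn_sub_half_ge (K : realFieldType) (C : K) d nu R : 0 <= C ->
  R%:R <= 4%:R * d%:R / 3%:R + C ->
  R%:R / 4%:R - C <= (minn d (nu + R) - R./2)%:R.
Proof.
move=> C_ge0 R_le.
have half_le : (2 * R./2 <= R)%N by rewrite -divn2; lia.
have sub_ge : (minn d (nu + R) <= (minn d (nu + R) - R./2) + R./2)%N by lia.
have := ler0n K R; have := ler0n K nu.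
have [le_min|lt_min] := leqP d (nu + R).
  by move: half_le sub_ge; rewrite (minn_idPl le_min) -!(ler_nat K) natrD natrM; lra.
by move: half_le sub_ge; rewrite (minn_idPr (ltnW lt_min)) -!(ler_nat K) !natrD; lra.
Qed.

Theorem lemma6p1 :
  forall C : rat, 0 <= C ->
  exists c : rat,
  forall (F : finFieldType) (d N nu : nat) (H h : {poly F}),
    H != 0 -> (size H <= N.+1)%N ->
    H = 'X^nu * h -> h`_0 != 0 ->
    ((size h).-1)%:R <= 4%:R * d%:R / 3%:R + C ->
    ((size h).-1)%:R / 4%:R - c <= (@rank_LH F d N H)%:R.
Proof.
move=> C C_ge0; exists C => F d N nu H h _ size_H_le H_def h0_neq0 R_le.
have h_neq0 : h != 0 by apply: contra h0_neq0 => /eqP ->; rewrite coef0.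
have size_H : size H = (nu + (size h).-1).+1.
  by rewrite H_def mulrC size_mulXn // -addnS prednK // size_poly_gt0.
apply: le_trans (minn_sub_half_ge nu C_ge0 R_le) _.
rewrite ler_nat; apply: rank_LH_ge_minn size_H size_H_le _.
by move=> n lt_n; rewrite H_def coefXnM lt_n.
Qed.
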